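(* Let $C\in\mathbb{R}^{n\times m}$ with $n\ge 2$ be such that the DSR graph $G_{C,C^t}$ is acyclic (has no cycles). Then for every $A\in\mathcal{Q}_0(C)$ and every $B\in\mathcal{Q}_0(C^t)$, both $AB$ and $(AB)^{[2]}$ are $P_0$-matrices, and $AB$ is positive semistable.
   Context: For $M\in\mathbb{R}^{n\times m}$, $\mathcal{Q}(M)$ is the set of matrices with the same entrywise sign pattern as $M$, and $\mathcal{Q}_0(M)$ its closure. A square real matrix is a $P_0$-matrix if all principal minors are nonnegative; positive semistable if all eigenvalues have nonnegative real part. $M^{[2]}$ denotes the second additive compound of a square matrix $M$: the matrix of $u\wedge v\mapsto Mu\wedge v+u\wedge Mv$ on $\Lambda^2\mathbb{R}^n$ in the lexicographically ordered basis $e_i\wedge e_j$, $i<j$. DSR graph: for $A\in\mathbb{R}^{n\times m}$, $B\in\mathbb{R}^{m\times n}$, $G_{A,B}$ is the signed bipartite digraph with S-vertices $S_1,\dots,S_n$, R-vertices $R_1,\dots,R_m$, an arc $R_j\to S_i$ of sign $\mathrm{sign}(A_{ij})$ iff $A_{ij}\ne0$ and an arc $S_i\to R_j$ of sign $\mathrm{sign}(B_{ji})$ iff $B_{ji}\ne 0$, where antiparallel arcs of the same sign are merged into a single undirected edge. A cycle is a nonempty closed walk (traversing edges consistently with orientation) that repeats no vertex except first$=$last; a cycle of length 2 occurs only when two distinct (non-merged) arcs join the same pair of vertices. For $G_{C,C^t}$ all edges are undirected, so acyclicity means the underlying simple graph is a forest. *)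

From HB Require Import structures.
From mathcomp Require Import all_boot all_order all_algebra.
From mathcomp Require Import complex.
Set Implicit Arguments.
Unset Strict Implicit.
Unset Printing Implicit Defensive.
Import Order.TTheory GRing.Theory Num.Theory.
Local Open Scope ring_scope.

Definition in_Q0 (R : realDomainType) (p q : nat) (M A : 'M[R]_(p, q)) : Prop :=
  forall i j, Num.sg (A i j) = 0 \/ Num.sg (A i j) = Num.sg (M i j).

Definition principal_submx (R : pzRingType) (k : nat) (M : 'M[R]_k) (S : {set 'I_k})
  : 'M[R]_#|S| :=
  \matrix_(a, b) M (@enum_val _ (mem S) a) (@enum_val _ (mem S) b).

Definition P0_matrix (R : realDomainType) (k : nat) (M : 'M[R]_k) : Prop :=
  forall S : {set 'I_k}, 0 <= \det (principal_submx M S).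

Definition positive_semistable (R : rcfType) (k : nat) (M : 'M[R]_k) : Prop :=
  forall z : R[i], root (map_poly (real_complex R) (char_poly M)) z ->
    0 <= complex.Re z.

(* Index set of the basis e_i /\ e_j, i < j, of Lambda^2 R^n; the
   enumeration of a finite predicate on 'I_n * 'I_n is lexicographic. *)
Definition wedge_idx (n : nat) : pred ('I_n * 'I_n) := fun p => (p.1 < p.2)%N.
Arguments wedge_idx n : clear implicits.

(* Second additive compound: matrix of u/\v |-> Mu/\v + u/\Mv in the basis
   (e_i /\ e_j)_{i<j} ordered lexicographically.  Expanding
   M^[2](e_k/\e_l) = sum_p M_pk e_p/\e_l + sum_p M_pl e_k/\e_p,
   the coefficient on e_i/\e_j is
   [l=j] M_ik - [l=i] M_jk + [k=i] M_jl - [k=j] M_il. *)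
Definition compound2 (R : pzRingType) (n : nat) (M : 'M[R]_n)
  : 'M[R]_#|wedge_idx n| :=
  \matrix_(a, b)
    let i := (@enum_val _ (wedge_idx n) a).1 in
    let j := (@enum_val _ (wedge_idx n) a).2 in
    let k := (@enum_val _ (wedge_idx n) b).1 in
    let l := (@enum_val _ (wedge_idx n) b).2 in
    (l == j)%:R * M i k - (l == i)%:R * M j k
    + (k == i)%:R * M j l - (k == j)%:R * M i l.

(* Vertices S_1..S_n, R_1..R_m; arc R_j -> S_i iff A_ij != 0 (sign sg A_ij),
   arc S_i -> R_j iff B_ji != 0 (sign sg B_ji); antiparallel arcs of equal
   sign are merged into one undirected edge (traversable both ways).
   The graph is bipartite, so a cycle alternates S and R vertices.
   - a cycle of length 2 S_i -> R_j -> S_i uses two distinct arcs, i.e.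
     both arcs exist and are NOT merged (different signs);
   - a cycle of length 2(k+2) >= 4 is
     S_{s0} -> R_{r0} -> S_{s1} -> R_{r1} -> ... -> R_{r(k+1)} -> S_{s0}
     with all S- and R-vertices distinct (an undirected edge can be
     traversed in either direction, so only the existence of the needed
     arc matters). *)
Definition dsr_has_cycle (R : realDomainType) (n m : nat)
  (A : 'M[R]_(n, m)) (B : 'M[R]_(m, n)) : Prop :=
  (exists (i : 'I_n) (j : 'I_m),
      [/\ A i j != 0, B j i != 0 & Num.sg (A i j) != Num.sg (B j i)])
  \/
  (exists (k : nat) (s : 'I_k.+2 -> 'I_n) (r : 'I_k.+2 -> 'I_m),
      [/\ injective s, injective r &
          forall t : 'I_k.+2, B (r t) (s t) != 0 /\ A (s (ordS t)) (r t) != 0]).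

Definition dsr_acyclic (R : realDomainType) (n m : nat)
  (A : 'M[R]_(n, m)) (B : 'M[R]_(m, n)) : Prop := ~ dsr_has_cycle A B.

(* If A and B lie in the interiors of the sign classes of C and C^T,
   then A_ij B_ji > 0 exactly on the edges of the bipartite graph of C, which is a
   forest.  Along a forest one can solve d_i^2 = (A_ij / B_ji) f_j^2, and then AB is
   diagonally similar to a Gram matrix X X^T.  Gram matrices have nonnegative
   principal minors and a nonnegative real spectrum, (X X^T)^[2] is again a Gram
   matrix, and all this survives diagonal similarity.  A general pair in the
   closures is the limit as e -> 0 of A + e sg(C), B + e sg(C^T): principal minors
   are polynomials in e, and an eigenvalue z with Re z < 0 in the limit would make
   the polynomial e |-> det (z - A_e B_e) vanish at 0 although it is bounded below
   by (- Re z)^n for e > 0. *)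

From HB Require Import structures.
From mathcomp Require Import all_boot all_order all_algebra.
From mathcomp Require Import complex.
From mathcomp Require Import fingroup perm zify ring lra.
Import Order.TTheory GRing.Theory Num.Theory.
Local Open Scope ring_scope.

Set Implicit Arguments.
Unset Strict Implicit.
Unset Printing Implicit Defensive.

Lemma det_mulmx_expand (R : comNzRingType) k N (U : 'M[R]_(k, N)) (V : 'M[R]_(N, k)) :
  \det (U *m V) = \sum_(f : {ffun 'I_k -> 'I_N})
     (\prod_i U i (f i)) * \det (\matrix_(i, j) V (f i) j).
Proof.
rewrite /(\det _).
under eq_bigr => s _.
  under eq_bigr => i _ do rewrite mxE.
  rewrite bigA_distr_bigA big_distrr /=.
over.
rewrite exchange_big /=; apply: eq_bigr => f _.
rewrite big_distrr /=; apply: eq_bigr => s _.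
rewrite mulrCA big_split /=; congr (_ * (_ * _)).
by apply: eq_bigr => i _; rewrite mxE.
Qed.

(* Averaging the expansion over the reindexings f |-> f \o s, s in S_k, gives
   k! det (U U^T) = sum_f det (U_f)^2, U_f being the columns f 0, ..., f (k-1) of U. *)
Lemma det_gram_ge0 (R : realFieldType) k N (U : 'M[R]_(k, N)) : 0 <= \det (U *m U^T).
Proof.
pose Uf (f : {ffun 'I_k -> 'I_N}) := \matrix_(i, j) U i (f j).
have expand_perm (s : 'S_k) : \det (U *m U^T) =
    \sum_(f : {ffun 'I_k -> 'I_N}) (-1) ^+ s * (\prod_i U i (f (s i))) * \det (Uf f).
  rewrite det_mulmx_expand.
  pose fs (f : {ffun 'I_k -> 'I_N}) : {ffun 'I_k -> 'I_N} := [ffun i => f (s i)].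
  pose fsV (f : {ffun 'I_k -> 'I_N}) : {ffun 'I_k -> 'I_N} := [ffun i => f (s^-1 i)%g].
  rewrite (reindex fs); last by exists fsV => f _; apply/ffunP => i; rewrite !ffunE ?permKV ?permK.
  apply: eq_bigr => f _.
  have -> : \matrix_(i, j) U^T (fs f i) j = row_perm s (Uf f)^T.
    by apply/matrixP => i j; rewrite !mxE ffunE.
  rewrite row_permE det_mulmx det_perm det_tr mulrCA mulrA.
  by congr (_ * _ * _); apply: eq_bigr => i _; rewrite ffunE.
have sum_squares : (k`!)%:R * \det (U *m U^T) = \sum_(f : {ffun 'I_k -> 'I_N}) \det (Uf f) ^+ 2.
  rewrite mulr_natl -card_Sn -sumr_const (eq_bigr _ (fun s _ => expand_perm s)).
  rewrite exchange_big /=; apply: eq_bigr => f _.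
  rewrite -big_distrl /= mulrC expr2; congr (_ * _).
  by apply: eq_bigr => s _; congr (_ * _); apply: eq_bigr => i _; rewrite mxE.
have : 0 <= (k`!)%:R * \det (U *m U^T) :> R.
  by rewrite sum_squares; apply: sumr_ge0 => f _; apply: sqr_ge0.
by rewrite pmulr_rge0 // ltr0n fact_gt0.
Qed.

Lemma principal_submx_mul (R : comNzRingType) k N (U : 'M[R]_(k, N)) (V : 'M[R]_(N, k)) S :
  principal_submx (U *m V) S =
  (\matrix_(a, c) U (@enum_val _ (mem S) a) c) *m (\matrix_(c, b) V c (@enum_val _ (mem S) b)).
Proof. by apply/matrixP => a b; rewrite !mxE; apply: eq_bigr => c _; rewrite !mxE. Qed.

Lemma principal_submx_map (R R' : comNzRingType) (f : {rmorphism R -> R'}) k (M : 'M[R]_k) S :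
  principal_submx (map_mx f M) S = map_mx f (principal_submx M S).
Proof. by apply/matrixP => a b; rewrite !mxE. Qed.

Lemma P0_gram (R : realFieldType) k N (U : 'M[R]_(k, N)) : P0_matrix (U *m U^T).
Proof.
move=> S; rewrite principal_submx_mul.
set W := \matrix_(a, c) U _ c.
have -> : \matrix_(c, b) U^T c (@enum_val _ (mem S) b) = W^T by apply/matrixP => c b; rewrite !mxE.
exact: det_gram_ge0.
Qed.

Lemma compound2_map (R R' : comNzRingType) (f : {rmorphism R -> R'}) k (M : 'M[R]_k) :
  compound2 (map_mx f M) = map_mx f (compound2 M).
Proof. by apply/matrixP => a b; rewrite !mxE /= !mxE !(rmorphB, rmorphD, rmorphM, rmorph_nat). Qed.

Lemma sum_nat_eq_mulr (R : pzSemiRingType) k (j : 'I_k) (F : 'I_k -> R) :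
  \sum_(l < k) (l == j)%:R * F l = F j.
Proof. by rewrite (bigD1 j) //= eqxx mul1r big1 ?addr0 // => l /negbTE ->; rewrite mul0r. Qed.

(* Column (q, l) of wedge_mx X holds the coordinates of (X e_q) /\ e_l in the
   basis (e_i /\ e_j)_(i < j). *)
Definition wedge_mx (R : pzRingType) n m (X : 'M[R]_(n, m)) :
  'M[R]_(#|wedge_idx n|, #|{: 'I_m * 'I_n}|) :=
  \matrix_(a, c)
    let i := (@enum_val _ (wedge_idx n) a).1 in
    let j := (@enum_val _ (wedge_idx n) a).2 in
    let q := (@enum_val _ (mem {: 'I_m * 'I_n}) c).1 in
    let l := (@enum_val _ (mem {: 'I_m * 'I_n}) c).2 in
    (l == j)%:R * X i q - (l == i)%:R * X j q.

Lemma compound2_gram (R : comNzRingType) n m (X : 'M[R]_(n, m)) :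
  compound2 (X *m X^T) = wedge_mx X *m (wedge_mx X)^T.
Proof.
apply/matrixP => a b; rewrite !mxE.
set i := (enum_val a).1; set j := (enum_val a).2.
set k := (enum_val b).1; set l := (enum_val b).2.
pose F (x : 'I_m * 'I_n) := ((x.2 == j)%:R * X i x.1 - (x.2 == i)%:R * X j x.1) *
   ((x.2 == l)%:R * X k x.1 - (x.2 == k)%:R * X l x.1).
transitivity (\sum_(x : 'I_m * 'I_n) F x); last first.
  rewrite (reindex (@enum_val _ (mem {: 'I_m * 'I_n}))) /=; last first.
    by exists (@enum_rank _) => x _; [exact: enum_valK | exact: enum_rankK].
  by apply: eq_bigr => c _; rewrite !mxE.
rewrite (eq_bigr (fun x => F (x.1, x.2))); last by case.
rewrite -(pair_big xpredT xpredT (fun q t => F (q, t))) /=.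
have sum_deltas (u v : 'I_n) (x y : R) :
    \sum_(t < n) ((t == u)%:R * x) * ((t == v)%:R * y) = (u == v)%:R * (x * y).
  under eq_bigr => t _ do rewrite -mulrA.
  by rewrite (sum_nat_eq_mulr u (fun t => x * ((t == v)%:R * y))) mulrCA.
under eq_bigr => q _.
  rewrite /F /=.
  under eq_bigr => t _ do rewrite mulrBl !mulrBr.
  rewrite !(big_split, sumrN) /= !sum_deltas.
over.
rewrite /= !(big_split, sumrN) /= -!big_distrr /=.
have gramE u v : (X *m X^T) u v = \sum_(q < m) X u q * X v q.
  by rewrite !mxE; apply: eq_bigr => q _; rewrite mxE.
rewrite !gramE [l == j]eq_sym [l == i]eq_sym [k == i]eq_sym [k == j]eq_sym.
ring.
Qed.

Lemma horner_char_poly (R : comNzRingType) n (M : 'M[R]_n) a :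
  (char_poly M).[a] = \det (a%:M - M).
Proof.
rewrite /(\det _) horner_sum; apply: eq_bigr => s _.
rewrite hornerM horner_exp !hornerE; congr (_ * _).
rewrite (big_morph _ (fun p q => hornerM p q a) (hornerC 1 a)).
by apply: eq_bigr => i _; rewrite !mxE !(hornerE, hornerMn).
Qed.

(* A complex eigenvector v of X X^T with eigenvalue z gives
   z |v|^2 = v X X^T v^* = |v X|^2. *)
Lemma gram_eigenvalue_ge0 (R : rcfType) n m (X : 'M[R]_(n, m)) (z : R[i]) :
  eigenvalue (map_mx (real_complex R) (X *m X^T)) z -> 0 <= z.
Proof.
set Xc := map_mx (real_complex R) X.
rewrite map_mxM -map_trmx -/Xc => /eigenvalueP [v eigen vn0].
pose vc := map_mx (@conjc R) v.
pose w := v *m Xc.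
have XcJ : map_mx (@conjc R) Xc = Xc by apply/matrixP => i j; rewrite !mxE conjc_real.
have quad_v : (v *m (Xc *m Xc^T) *m vc^T) 0 0 = z * \sum_i v 0 i * conjc (v 0 i).
  rewrite eigen -scalemxAl mxE; congr (_ * _); rewrite mxE.
  by apply: eq_bigr => i _; rewrite !mxE.
have quad_w : (v *m (Xc *m Xc^T) *m vc^T) 0 0 = \sum_q w 0 q * conjc (w 0 q).
  have -> : v *m (Xc *m Xc^T) *m vc^T = w *m (map_mx (@conjc R) w)^T.
    by rewrite /w map_mxM XcJ trmx_mul !mulmxA.
  by rewrite mxE; apply: eq_bigr => q _; rewrite !mxE.
have w_ge0 : 0 <= \sum_q w 0 q * conjc (w 0 q) by apply: sumr_ge0 => q _; apply: mulcJ_ge0.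
have v_gt0 : 0 < \sum_i v 0 i * conjc (v 0 i).
  have [i vi | v0] := pickP (fun i => v 0 i != 0); last first.
    by case/eqP: vn0; apply/rowP => i; move: (v0 i) => /negbFE /eqP ->; rewrite mxE.
  rewrite (bigD1 i) //=; apply: (@lt_le_trans _ _ (v 0 i * conjc (v 0 i))).
    by rewrite lt_def mulcJ_ge0 andbT mulf_neq0 // conjc_eq0.
  by rewrite lerDl; apply: sumr_ge0 => j _; apply: mulcJ_ge0.
have -> : z = (\sum_q w 0 q * conjc (w 0 q)) / \sum_i v 0 i * conjc (v 0 i).
  by rewrite -quad_w quad_v mulfK // gt_eqF.
by rewrite divr_ge0 // ltW.
Qed.

Lemma semistable_gram (R : rcfType) n m (X : 'M[R]_(n, m)) : positive_semistable (X *m X^T).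
Proof.
move=> z; rewrite map_char_poly -eigenvalue_root_char => /gram_eigenvalue_ge0.
by rewrite lecE => /andP [_]; case: z.
Qed.

Definition diag_conj (R : unitRingType) k (d : 'I_k -> R) (G : 'M[R]_k) : 'M[R]_k :=
  \matrix_(i, j) (d i * G i j / d j).

Section DiagConj.
Variables (R : fieldType) (k : nat) (d : 'I_k -> R).
Hypothesis d_neq0 : forall i, d i != 0.

Lemma det_diag_conj G : \det (diag_conj d G) = \det G.
Proof.
have -> : diag_conj d G = diag_mx (\row_i d i) *m G *m diag_mx (\row_i (d i)^-1).
  by apply/matrixP => i j; rewrite mul_mx_diag mul_diag_mx !mxE.
rewrite !det_mulmx !det_diag mulrAC -big_split /= big1 ?mul1r // => i _.
by rewrite !mxE mulfV.
Qed.

Lemma principal_submx_diag_conj G S :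
  principal_submx (diag_conj d G) S =
  diag_conj (fun a => d (@enum_val _ (mem S) a)) (principal_submx G S).
Proof. by apply/matrixP => a b; rewrite !mxE. Qed.

Lemma scalar_subr_diag_conj a G : a%:M - diag_conj d G = diag_conj d (a%:M - G).
Proof.
apply/matrixP => i j; rewrite !mxE.
by case: (eqVneq i j) => [<- | _]; rewrite ?mulr1n ?mulr0n; field; apply: d_neq0.
Qed.

Lemma compound2_diag_conj G :
  compound2 (diag_conj d G) = diag_conj
    (fun a => d (@enum_val _ (wedge_idx k) a).1 * d (@enum_val _ (wedge_idx k) a).2)
    (compound2 G).
Proof.
apply/matrixP => a b; rewrite !mxE /= !mxE.
move: (enum_val a) (enum_val b) => [i j] [p q] /=.
have dp := d_neq0 p; have dq := d_neq0 q; have di := d_neq0 i; have dj := d_neq0 j.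
have eq_mul (x y : 'I_k) (s t : R) : (x = y -> s = t) -> (x == y)%:R * s = (x == y)%:R * t.
  by move=> st; case: (x =P y) => [/st-> | _] //; rewrite !mul0r.
transitivity ((q == j)%:R * (d i * d j * G i p / (d p * d q))
  - (q == i)%:R * (d i * d j * G j p / (d p * d q))
  + (p == i)%:R * (d i * d j * G j q / (d p * d q))
  - (p == j)%:R * (d i * d j * G i q / (d p * d q))).
  by congr (_ - _ + _ - _); apply: eq_mul => ->; field; rewrite ?dp ?dq ?di ?dj.
by field; rewrite ?dp ?dq.
Qed.
End DiagConj.

Lemma P0_diag_conj (R : realFieldType) k (d : 'I_k -> R) G :
  (forall i, d i != 0) -> P0_matrix G -> P0_matrix (diag_conj d G).
Proof. by move=> dn0 PG S; rewrite principal_submx_diag_conj det_diag_conj. Qed.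

Lemma map_diag_conj (R R' : fieldType) (f : {rmorphism R -> R'}) k (d : 'I_k -> R) G :
  map_mx f (diag_conj d G) = diag_conj (f \o d) (map_mx f G).
Proof. by apply/matrixP => i j; rewrite !mxE rmorphM fmorphV rmorphM. Qed.

Lemma semistable_diag_conj (R : rcfType) k (d : 'I_k -> R) G :
  (forall i, d i != 0) -> positive_semistable G -> positive_semistable (diag_conj d G).
Proof.
move=> dn0 sG z; rewrite map_char_poly map_diag_conj rootE horner_char_poly.
have rc_d_neq0 i : (real_complex R \o d) i != 0 by rewrite /= fmorph_eq0.
rewrite scalar_subr_diag_conj // det_diag_conj //.
by rewrite -horner_char_poly -rootE -map_char_poly; apply: sG.
Qed.

Lemma diag_conj_gram_props (R : rcfType) n m (d : 'I_n -> R) (X : 'M[R]_(n, m)) :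
  (forall i, d i != 0) ->
  let M := diag_conj d (X *m X^T) in
  [/\ P0_matrix M, P0_matrix (compound2 M) & positive_semistable M].
Proof.
move=> dn0 /=; split.
- exact/P0_diag_conj/P0_gram.
- rewrite compound2_diag_conj // compound2_gram.
  by apply/P0_diag_conj/P0_gram => a; rewrite mulf_neq0.
- exact/semistable_diag_conj/semistable_gram.
Qed.

Section BipartiteForest.
Variables (n m : nat) (E : 'I_n -> 'I_m -> bool).

Definition bipartite_acyclic : Prop :=
  ~ exists k (s : 'I_k.+2 -> 'I_n) (r : 'I_k.+2 -> 'I_m),
      [/\ injective s, injective r &
          forall t : 'I_k.+2, E (s t) (r t) /\ E (s (ordS t)) (r t)].

Lemma bipartite_cycle k (s : nat -> 'I_n) (r : nat -> 'I_m) :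
  {in gtn k.+2 &, injective s} -> {in gtn k.+2 &, injective r} ->
  (forall t, (t < k.+2)%N -> E (s t) (r t)) ->
  (forall t, (t < k.+1)%N -> E (s t.+1) (r t)) ->
  E (s 0%N) (r k.+1) ->
  ~ bipartite_acyclic.
Proof.
move=> s_inj r_inj Esr Esr_next Eclose; apply.
exists k, (fun t : 'I_k.+2 => s t), (fun t : 'I_k.+2 => r t); split.
- by move=> t1 t2 st; apply/val_inj/(s_inj _ _ (ltn_ord t1) (ltn_ord t2) st).
- by move=> t1 t2 rt; apply/val_inj/(r_inj _ _ (ltn_ord t1) (ltn_ord t2) rt).
move=> t; split; first exact: Esr.
rewrite /ordS /=; have [lt|ge] := ltnP t k.+1.
  by rewrite modn_small ?ltnS //; apply: Esr_next.
have -> : nat_of_ord t = k.+1 by apply/anti_leq; rewrite ge -ltnS ltn_ord.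
by rewrite modnn.
Qed.

Definition bip_adj (F : {set 'I_n * 'I_m}) : rel ('I_n + 'I_m) := fun x y =>
  match x, y with
  | inl i, inr j | inr j, inl i => (i, j) \in F
  | _, _ => false
  end.

Lemma bip_adj_sym F : symmetric (bip_adj F).
Proof. by case=> [i|j] [i'|j']. Qed.

Definition is_inl (x : 'I_n + 'I_m) := if x is inl _ then true else false.

Lemma bip_adj_is_inl F x y : bip_adj F x y -> is_inl y = ~~ is_inl x.
Proof. by case: x => [i|j]; case: y => [i'|j']. Qed.

Lemma bip_path_is_inl F u p : path (bip_adj F) (inl u) p ->
  forall t, (t <= size p)%N -> is_inl (nth (inl u) (inl u :: p) t) = ~~ odd t.
Proof.
move=> /(pathP (inl u)) adj_p; elim=> [|t IH] //= lt_t_p.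
by rewrite (bip_adj_is_inl (adj_p t lt_t_p)) IH // ltnW.
Qed.

Lemma bip_path_size F u v p : path (bip_adj F) (inl u) p -> inr v = last (inl u) p ->
  (u, v) \notin F -> exists k, size p = (k.*2 + 3)%N.
Proof.
move=> path_p last_p uvF.
have odd_p : odd (size p).
  have := bip_path_is_inl path_p (leqnn (size p)).
  by rewrite -[size p]/(size (inl u :: p)).-1 nth_last /= -last_p => /esym /negbFE.
have size_p_neq1 : size p != 1%N.
  apply/eqP; move: path_p last_p; case: (p) => [|y [|]] //= /andP [adj_uy _] yv.
  by rewrite -yv /= (negbTE uvF) in adj_uy.
exists (size p)./2.-1; move: size_p_neq1; have := odd_double_half (size p).
rewrite odd_p add1n; set h := _./2; move=> <-; case: h => [|h] //= _.
by rewrite -!muln2; lia.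
Qed.

(* A shortest path from S_u to R_v avoiding the edge (u, v) closes up with that
   edge into a simple cycle, of length at least 4 since (u, v) is not on it. *)
Lemma connect_bipartite_cycle (F : {set 'I_n * 'I_m}) u v :
  (forall i j, (i, j) \in F -> E i j) -> E u v -> (u, v) \notin F ->
  connect (bip_adj F) (inl u) (inr v) -> ~ bipartite_acyclic.
Proof.
move=> FE Euv uvF /connectP [p0 path_p0 last_p0].
case: (shortenP path_p0) last_p0 => p path_p uniq_p _ last_p.
have [k size_p] := bip_path_size path_p last_p uvF.
set x0 : 'I_n + 'I_m := inl u; set c := x0 :: p.
have c_is_inl t : (t <= size p)%N -> is_inl (nth x0 c t) = ~~ odd t.
  by move=> lt; apply: bip_path_is_inl path_p t lt.
have size_c : size c = (k.*2 + 4)%N by rewrite /c /= size_p; lia.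
pose s t := if nth x0 c t.*2 is inl i then i else u.
pose r t := if nth x0 c t.*2.+1 is inr j then j else v.
have c_s t : (t < k.+2)%N -> nth x0 c t.*2 = inl (s t).
  move=> lt; have /c_is_inl : (t.*2 <= size p)%N by rewrite size_p -!muln2; lia.
  by rewrite odd_double /s; case: (nth x0 c _).
have c_r t : (t < k.+2)%N -> nth x0 c t.*2.+1 = inr (r t).
  move=> lt; have /c_is_inl : (t.*2.+1 <= size p)%N by rewrite size_p -!muln2; lia.
  by rewrite [odd _]/= odd_double /r; case: (nth x0 c _).
have /(pathP x0) adj_c := path_p.
apply: (@bipartite_cycle k s r).
- move=> t1 t2; rewrite !inE => lt1 lt2 st.
  have /eqP : nth x0 c t1.*2 = nth x0 c t2.*2 by rewrite c_s // c_s // st.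
  by rewrite nth_uniq ?size_c -?muln2 1?ltnW ?ltnS //; try lia; move/eqP/double_inj.
- move=> t1 t2; rewrite !inE => lt1 lt2 rt.
  have /eqP : nth x0 c t1.*2.+1 = nth x0 c t2.*2.+1 by rewrite c_r // c_r // rt.
  by rewrite nth_uniq ?size_c -?muln2 //; try lia; case/eqP/double_inj.
- move=> t lt; have := adj_c t.*2; rewrite size_p -muln2 => /(_ ltac:(lia)).
  by rewrite muln2 c_s // -[nth x0 p _]/(nth x0 c _.+1) c_r //; apply: FE.
- move=> t lt; have := adj_c t.*2.+1; rewrite size_p -muln2 => /(_ ltac:(lia)).
  rewrite muln2 c_r ?(ltn_trans lt) //.
  by rewrite -[nth x0 p _]/(nth x0 c t.+1.*2) c_s //; apply: FE.
have c_last : nth x0 c (size p) = inr v by rewrite last_p -[size p]/(size c).-1 nth_last.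
have rk : r k.+1 = v.
  have := c_r k.+1 (ltnSn _); rewrite (_ : k.+1.*2.+1 = size p) ?c_last; first by case.
  by rewrite size_p -!muln2; lia.
by rewrite rk; exact: Euv.
Qed.

(* Removing an edge (u, v) disconnects u from v, so rescaling the component of
   R_v repairs the equation on (u, v) without disturbing the other edges. *)
Lemma acyclic_potential (R : realFieldType) (rho : 'I_n -> 'I_m -> R) :
  (forall i j, E i j -> 0 < rho i j) -> bipartite_acyclic ->
  exists phi : 'I_n + 'I_m -> R, (forall x, 0 < phi x) /\
    (forall i j, E i j -> phi (inl i) = rho i j * phi (inr j)).
Proof.
move=> rho_gt0 acyc.
suff potential_on N (F : {set 'I_n * 'I_m}) : #|F| = N -> (forall i j, (i, j) \in F -> E i j) ->
  exists phi : 'I_n + 'I_m -> R, (forall x, 0 < phi x) /\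
    (forall i j, (i, j) \in F -> phi (inl i) = rho i j * phi (inr j)).
  have [|phi [phi_gt0 phiE]] := potential_on _ [set p | E p.1 p.2] erefl.
    by move=> i j; rewrite inE.
  by exists phi; split => // i j Eij; apply: phiE; rewrite inE.
elim: N F => [|N IH] F card_F FE.
  exists (fun=> 1); split => // i j.
  by move/eqP: card_F; rewrite cards_eq0 => /eqP ->; rewrite inE.
have /card_gt0P [[u v] uvF] : (0 < #|F|)%N by rewrite card_F.
pose F' := F :\ (u, v).
have card_F' : #|F'| = N by move: card_F; rewrite (cardsD1 (u, v)) uvF add1n => -[].
have F'E i j : (i, j) \in F' -> E i j by rewrite inE => /andP [_ /FE].
have [phi [phi_gt0 phiF']] := IH F' card_F' F'E.
have uv_disconnected : ~~ connect (bip_adj F') (inl u) (inr v).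
  apply/negP => uv_connected; apply: (connect_bipartite_cycle F'E (FE _ _ uvF) _ uv_connected) acyc.
  by rewrite !inE eqxx.
have connect_symF' := sym_connect_sym (@bip_adj_sym F').
pose a := phi (inl u) / (rho u v * phi (inr v)).
have a_gt0 : 0 < a by rewrite divr_gt0 ?mulr_gt0 ?rho_gt0 ?FE.
exists (fun x => phi x * (if connect (bip_adj F') (inr v) x then a else 1)); split.
  by move=> x; case: ifP => _; rewrite mulr_gt0.
move=> i j ijF; have [[-> ->] | ne] := eqVneq (i, j) (u, v).
  rewrite connect0 connect_symF' (negbTE uv_disconnected) mulr1 /a.
  have := phi_gt0 (inl u); have := phi_gt0 (inr v); have := rho_gt0 _ _ (FE _ _ uvF).
  by move=> ? ? ?; field; rewrite !gt_eqF.
have ijF' : (i, j) \in F' by rewrite !inE ne.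
rewrite (phiF' i j ijF') -mulrA; congr (_ * (_ * _)).
suff -> : connect (bip_adj F') (inr v) (inl i) = connect (bip_adj F') (inr v) (inr j) by [].
by apply/idP/idP => vc; apply: (connect_trans vc); apply: connect1; rewrite // bip_adj_sym.
Qed.

End BipartiteForest.

(* With a potential phi (S_i) = (A_ij / B_ji) phi (R_j) on the edges, the choice
   d_i = sqrt phi (S_i) and X_ij = A_ij sqrt phi (R_j) / d_i gives
   A_ij B_jk = d_i X_ij X_kj / d_k for every j. *)
Lemma mulmx_diag_conj_gram (R : rcfType) n m (E : 'I_n -> 'I_m -> bool)
    (A : 'M[R]_(n, m)) (B : 'M[R]_(m, n)) :
  bipartite_acyclic E -> (forall i j, E i j -> 0 < A i j * B j i) ->
  (forall i j, ~~ E i j -> A i j = 0 /\ B j i = 0) ->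
  exists (d : 'I_n -> R) (X : 'M[R]_(n, m)),
    (forall i, d i != 0) /\ A *m B = diag_conj d (X *m X^T).
Proof.
move=> acyc AB_gt0 AB_off.
have AB_neq0 i j : E i j -> A i j != 0 /\ B j i != 0.
  by move/AB_gt0; case: eqP => [->|]; case: eqP => [->|]; rewrite ?mul0r ?mulr0 ?ltxx.
pose rho i j := A i j / B j i.
have rho_gt0 i j : E i j -> 0 < rho i j.
  move=> Eij; have [a0 b0] := AB_neq0 i j Eij.
  have -> : rho i j = A i j * B j i / B j i ^+ 2 by rewrite /rho; field.
  by rewrite divr_gt0 ?AB_gt0 // exprn_even_gt0.
have [phi [phi_gt0 phiE]] := acyclic_potential rho_gt0 acyc.
pose d i := Num.sqrt (phi (inl i)).
pose f j := Num.sqrt (phi (inr j)).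
have d_gt0 i : 0 < d i by rewrite sqrtr_gt0.
have f_gt0 j : 0 < f j by rewrite sqrtr_gt0.
have dd i : d i * d i = phi (inl i) by rewrite -expr2 sqr_sqrtr // ltW.
have ff j : f j * f j = phi (inr j) by rewrite -expr2 sqr_sqrtr // ltW.
exists d, (\matrix_(i, j) (A i j * f j / d i)); split; first by move=> i; rewrite gt_eqF.
apply/matrixP => i k; rewrite !mxE big_distrr big_distrl /=; apply: eq_bigr => j _.
rewrite !mxE.
have := d_gt0 i; have := d_gt0 k; have := f_gt0 j => fj dk di.
have -> : d i * (A i j * f j / d i * (A k j * f j / d k)) / d k =
          A i j * (A k j * (f j * f j) / (d k * d k)) by field; rewrite !gt_eqF.
rewrite dd ff; case Ekj: (E k j); last first.
  by have [-> ->] := AB_off k j (negbT Ekj); rewrite !mul0r mulr0.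
have [a0 b0] := AB_neq0 k j Ekj; have := phi_gt0 (inr j) => phij.
by rewrite (phiE k j Ekj) /rho; congr (_ * _); field; rewrite a0 b0 gt_eqF.
Qed.

Lemma sg_addr_sg (R : realDomainType) (c x e : R) : c != 0 -> 0 < e ->
  Num.sg x = 0 \/ Num.sg x = Num.sg c -> Num.sg (x + e * Num.sg c) = Num.sg c.
Proof.
move=> c_neq0 e_gt0 x_sg.
have [c_lt0 | c_gt0 | /eqP] := ltrgtP c 0; last by rewrite (negbTE c_neq0).
- rewrite (ltr0_sg c_lt0) in x_sg *; apply: ltr0_sg.
  have : x <= 0 by rewrite -sgr_le0; case: x_sg => ->; rewrite ?lerN10.
  lra.
- rewrite (gtr0_sg c_gt0) in x_sg *; apply: gtr0_sg.
  have : 0 <= x by rewrite -sgr_ge0; case: x_sg => ->; rewrite ?ler01.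
  lra.
Qed.

Lemma horner_near0_bound (T : numFieldType) (p : {poly T}) :
  exists K : T, 0 <= K /\ forall x, `|x| <= 1 -> `|p.[x] - p.[0]| <= `|x| * K.
Proof.
elim/poly_ind: p => [|q c [K [K_ge0 qK]]].
  by exists 0; split => // x _; rewrite !horner0 subrr normr0 mulr0.
exists (K + `|q.[0]|); split; first by rewrite addr_ge0.
move=> x x_le1; rewrite !hornerMXaddC mulr0 add0r addrK normrM mulrC.
rewrite ler_wpM2l // -[q.[x]](subrK q.[0]) (le_trans (ler_normD _ _)) // lerD2r.
by rewrite (le_trans (qK x x_le1)) // ler_piMl.
Qed.

Lemma exists_small_pos (R : realFieldType) (del K : R) : 0 < del -> 0 <= K ->
  exists e, [/\ 0 < e, e <= 1 & e * K < del].
Proof.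
move=> del_gt0 K_ge0; have h : 0 < del + K + 1 by lra.
exists (del / (del + K + 1)); split.
- by rewrite divr_gt0.
- by rewrite ler_pdivrMr // mul1r; lra.
- by rewrite mulrAC ltr_pdivrMr //; nra.
Qed.

Lemma horner0_ge0 (R : realFieldType) (p : {poly R}) :
  (forall e, 0 < e -> 0 <= p.[e]) -> 0 <= p.[0].
Proof.
move=> p_ge0; rewrite leNgt -oppr_gt0; apply/negP => Np0_gt0.
have [K [K_ge0 pK]] := horner_near0_bound p.
have [e [e_gt0 e_le1 eK]] := exists_small_pos Np0_gt0 K_ge0.
have := pK e; rewrite (ger0_norm (ltW e_gt0)) => /(_ e_le1) pe.
have := p_ge0 e e_gt0; have := ler_norm (p.[e] - p.[0]); nra.
Qed.

Lemma P0_horner0 (R : realFieldType) k (P : 'M[{poly R}]_k) :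
  (forall e, 0 < e -> P0_matrix (map_mx (horner_eval e) P)) ->
  P0_matrix (map_mx (horner_eval 0) P).
Proof.
move=> P_P0 S; rewrite principal_submx_map det_map_mx; apply: horner0_ge0 => e e_gt0.
by have := P_P0 e e_gt0 S; rewrite principal_submx_map det_map_mx.
Qed.

Lemma norm_subr_ge_Re (R : rcfType) (z r : R[i]) :
  complex.Re z < 0 -> 0 <= complex.Re r -> real_complex R (- complex.Re z) <= `|z - r|.
Proof.
move=> z_lt0 r_ge0; rewrite normc_def lecR.
have -> : complex.Re (z - r) = complex.Re z - complex.Re r.
  by case: z {z_lt0} => ? ?; case: r {r_ge0}.
rewrite -[leLHS](@ger0_norm _ (- complex.Re z)); last lra.
rewrite -sqrtr_sqr ler_sqrt; last by rewrite addr_ge0 ?sqr_ge0.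
have : (- complex.Re z) ^+ 2 <= (complex.Re z - complex.Re r) ^+ 2 by nra.
have := sqr_ge0 (complex.Im (z - r)); lra.
Qed.

Lemma norm_det_scalar_subr_ge (R : rcfType) n (M : 'M[R]_n) (z : R[i]) :
  positive_semistable M -> complex.Re z < 0 ->
  real_complex R ((- complex.Re z) ^+ n) <= `|\det (z%:M - map_mx (real_complex R) M)|.
Proof.
move=> M_ss z_lt0; rewrite -horner_char_poly -map_char_poly.
set p := map_poly _ _.
have [rs p_split] := closed_field_poly_normal p.
have pE : p = \prod_(r <- rs) ('X - r%:P).
  by rewrite {1}p_split (monicP _) ?scale1r // map_monic char_poly_monic.
have size_rs : size rs = n.
  have := size_prod_XsubC rs id; rewrite -pE size_map_poly size_char_poly; by case.
have rs_ge0 r : r \in rs -> 0 <= complex.Re r.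
  by move=> r_rs; apply: M_ss; rewrite -/p pE root_prod_XsubC.
rewrite pE horner_prod normr_prod -size_rs rmorphXn /=.
elim: rs rs_ge0 {p_split size_rs pE} => [|r rs IH] rs_ge0; first by rewrite big_nil.
rewrite big_cons /= exprS; apply: ler_pM.
- by rewrite ler0c; lra.
- by rewrite exprn_ge0 // ler0c; lra.
- by rewrite hornerXsubC norm_subr_ge_Re // rs_ge0 ?mem_head.
- by apply: IH => r' r'_rs; rewrite rs_ge0 // in_cons r'_rs orbT.
Qed.

(* If the limit had an eigenvalue z with Re z < 0, the polynomial
   e |-> det (z - P(e)) would vanish at 0 although, by norm_det_scalar_subr_ge, it is
   bounded below by (- Re z)^k for e > 0. *)
Lemma semistable_horner0 (R : rcfType) k (P : 'M[{poly R}]_k) :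
  (forall e, 0 < e -> positive_semistable (map_mx (horner_eval e) P)) ->
  positive_semistable (map_mx (horner_eval 0) P).
Proof.
move=> P_ss z z_root; rewrite leNgt; apply/negP => z_lt0.
pose rc := real_complex R.
pose H := \det ((z%:P)%:M - map_mx (map_poly rc) P).
have H_eval e : H.[rc e] = \det (z%:M - map_mx rc (map_mx (horner_eval e) P)).
  rewrite -horner_evalE -det_map_mx; congr (\det _); apply/matrixP => i j.
  by rewrite !mxE /= horner_evalE hornerD hornerN hornerMn hornerC horner_map.
have H0 : H.[0] = 0.
  have := H_eval 0; rewrite /rc rmorph0 => ->.
  by move: z_root; rewrite map_char_poly rootE horner_char_poly => /eqP.
have [K [K_ge0 HK]] := horner_near0_bound H.
have KE : K = rc (complex.Re K) by move: (ger0_Im K_ge0); clear; case: K => a b /= ->.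
have ReK_ge0 : 0 <= complex.Re K by move: K_ge0; rewrite KE /rc ler0c.
have Nz_gt0 : 0 < - complex.Re z by rewrite oppr_gt0.
have [e [e_gt0 e_le1 eK]] := exists_small_pos (exprn_gt0 k Nz_gt0) ReK_ge0.
have lower := norm_det_scalar_subr_ge (P_ss e e_gt0) z_lt0.
have rc_e_ge0 : 0 <= rc e by rewrite ler0c ltW.
have := HK (rc e); rewrite ger0_norm // H0 subr0 H_eval lecR => /(_ e_le1) upper.
have := le_trans lower upper; rewrite KE -rmorphM lecR.
by rewrite leNgt eK.
Qed.

Definition sign_perturb (R : realDomainType) n m (A C : 'M[R]_(n, m)) : 'M[{poly R}]_(n, m) :=
  \matrix_(i, j) ((A i j)%:P + 'X * (Num.sg (C i j))%:P).

Lemma horner_sign_perturb (R : realDomainType) n m (A C : 'M[R]_(n, m)) e :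
  map_mx (horner_eval e) (sign_perturb A C) = \matrix_(i, j) (A i j + e * Num.sg (C i j)).
Proof. by apply/matrixP => i j; rewrite !mxE horner_evalE !hornerE. Qed.

Lemma dsr_acyclic_bipartite (R : realDomainType) n m (C : 'M[R]_(n, m)) :
  dsr_acyclic C C^T -> bipartite_acyclic (fun i j => C i j != 0).
Proof.
move=> acyc [k [s [r [s_inj r_inj cyc]]]]; apply: acyc; right.
by exists k, s, r; split => // t; rewrite mxE.
Qed.

Lemma sign_perturb_diag_conj_gram (R : rcfType) n m (C A : 'M[R]_(n, m)) (B : 'M[R]_(m, n)) e :
  dsr_acyclic C C^T -> in_Q0 C A -> in_Q0 C^T B -> 0 < e ->
  exists (d : 'I_n -> R) (X : 'M[R]_(n, m)), (forall i, d i != 0) /\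
    map_mx (horner_eval e) (sign_perturb A C *m sign_perturb B C^T) = diag_conj d (X *m X^T).
Proof.
move=> acyc A_Q0 B_Q0 e_gt0; rewrite map_mxM !horner_sign_perturb.
apply: mulmx_diag_conj_gram (dsr_acyclic_bipartite acyc) _ _ => i j; rewrite !mxE.
- move=> C_neq0; have := B_Q0 j i; rewrite mxE => B_sg.
  by rewrite -sgr_gt0 sgrM !sg_addr_sg // -expr2 sqr_sg C_neq0 ltr01.
- rewrite negbK => /eqP C0; have := A_Q0 i j; have := B_Q0 j i.
  rewrite !mxE C0 sgr0 mulr0 !addr0 => B_sg A_sg.
  by split; apply/eqP; rewrite -sgr_eq0; [case: A_sg | case: B_sg] => ->.
Qed.

Theorem theorem6p3 (R : rcfType) (n m : nat) (C : 'M[R]_(n, m)) :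
  (2 <= n)%N ->
  dsr_acyclic C C^T ->
  forall (A : 'M[R]_(n, m)) (B : 'M[R]_(m, n)),
    in_Q0 C A -> in_Q0 C^T B ->
    [/\ P0_matrix (A *m B), P0_matrix (compound2 (A *m B))
      & positive_semistable (A *m B)].
Proof.
move=> _ acyc A B A_Q0 B_Q0.
pose P := sign_perturb A C *m sign_perturb B C^T.
have AB_horner0 : A *m B = map_mx (horner_eval 0) P.
  rewrite map_mxM !horner_sign_perturb.
  by congr (_ *m _); apply/matrixP => i j; rewrite !mxE mul0r addr0.
have P_props e : 0 < e -> let M := map_mx (horner_eval e) P in
    [/\ P0_matrix M, P0_matrix (compound2 M) & positive_semistable M].
  move=> e_gt0; have [d [X [d_neq0 ->]]] := sign_perturb_diag_conj_gram acyc A_Q0 B_Q0 e_gt0.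
  exact: diag_conj_gram_props.
rewrite AB_horner0 compound2_map; split.
- by apply: P0_horner0 => e /P_props [].
- by apply: P0_horner0 => e /P_props [_ + _]; rewrite compound2_map.
- by apply: semistable_horner0 => e /P_props [].
Qed.
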